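(* Let $\mathcal C$ be a class of finite simple graphs and let $f:\mathbb{N}\to\mathbb{N}$ be an unbounded non-decreasing function with $f(x)\le x$ for all $x$. If $\sup_{G\in\mathcal C} N_f(G,r)<\infty$ for every $r\in\mathbb{N}$, then $\mathcal C$ has bounded expansion.
   Context: For a finite simple graph $G$, a function $f:\mathbb{N}\to\mathbb{N}$ and a positive integer $p$, $N_f(G,p)$ denotes the minimum number of colours in a colouring of the edges of $G$ such that every cycle $\gamma$ of $G$ receives at least $\min(f(|\gamma|),p+1)$ distinct colours, where $|\gamma|$ is the length of $\gamma$. A simple graph $H$ is a shallow minor of $G$ at depth $r$ if there are pairwise vertex-disjoint subtrees $T_1,\dots,T_k$ of $G$, each having a root from which every vertex of the tree is at distance at most $r$ in the tree, such that $H$ is isomorphic to a subgraph of the graph with vertex set $\{T_1,\dots,T_k\}$ in which $T_i,T_j$ are adjacent iff some edge of $G$ joins a vertex of $T_i$ to a vertex of $T_j$. $\nabla_r(G)$ is the maximum of $\|H\|/|H|$ over all shallow minors $H$ of $G$ at depth $r$. A class $\mathcal C$ has bounded expansion if $\sup_{G\in\mathcal C}\nabla_r(G)<\infty$ for every integer $r\ge 0$. *)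

From mathcomp Require Import all_boot.
Set Implicit Arguments. Unset Strict Implicit. Unset Printing Implicit Defensive.

Record sgraph := SGraph {
  vert :> finType;
  adj : rel vert;
  adj_sym : symmetric adj;
  adj_irr : irreflexive adj }.

Definition nedges (G : sgraph) : nat :=
  #|[set p : G * G | adj p.1 p.2]| %/ 2.

Definition is_cycle (G : sgraph) (s : seq G) : Prop :=
  [/\ uniq s, 3 <= size s & cycle (@adj G) s].

Definition cycle_edges (G : sgraph) (s : seq G) : seq (G * G) :=
  zip s (rot 1 s).

Definition edge_colouring (G : sgraph) (k : nat) (c : G -> G -> nat) : Prop :=
  forall x y, adj x y -> c x y = c y x /\ c x y < k.

Definition ncolours (G : sgraph) (c : G -> G -> nat) (s : seq G) : nat :=
  size (undup [seq c e.1 e.2 | e <- cycle_edges s]).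

Definition good_colouring (G : sgraph) (f : nat -> nat) (p : nat)
    (c : G -> G -> nat) : Prop :=
  forall s : seq G, is_cycle s -> minn (f (size s)) p.+1 <= ncolours c s.

Definition Nf_le (G : sgraph) (f : nat -> nat) (p k : nat) : Prop :=
  exists c : G -> G -> nat, edge_colouring k c /\ good_colouring f p c.

(* The tree is encoded by a parent function par:
   its edges are {x, par x} for x <> root; par root = root and
   iterating par r times from any vertex of B reaches the root. *)
Definition shallow_tree (G : sgraph) (r : nat) (B : {set G}) : Prop :=
  exists (root : G) (par : G -> G),
    [/\ root \in B, par root = root &
        forall x, x \in B ->
          [/\ par x \in B, x != root -> adj x (par x) & iter r par x = root]].

Definition shallow_minor (H G : sgraph) (r : nat) : Prop :=
  exists B : H -> {set G},
    [/\ forall w, shallow_tree r (B w),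
        forall w w', w != w' -> [disjoint B w & B w'] &
        forall w w', adj w w' ->
          exists x y, [/\ x \in B w, y \in B w' & adj x y]].

Definition nabla_le (G : sgraph) (r M : nat) : Prop :=
  forall H : sgraph, shallow_minor H G r -> nedges H <= M * #|H|.

Definition bounded_expansion (C : sgraph -> Prop) : Prop :=
  forall r : nat, exists M : nat, forall G, C G -> nabla_le G r M.

From mathcomp Require Import all_boot zify.
From Stdlib Require Import IndefiniteDescription.
Set Implicit Arguments. Unset Strict Implicit. Unset Printing Implicit Defensive.

(* Fix a depth r and a colouring c of G with M colours in which every cycle
   of length l receives at least min(f l, 2r+2) colours; choose L with
   f L >= 2r+2.  Let H be a shallow minor of G at depth r, with branch sets
   B w that are trees of radius r.  Give each edge ww' of H a "type": the set
   of colours of one G-edge xy between B w and B w' together with those of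
   the tree paths from x and y to their roots, a palette of at most 2r+1
   colours.  A cycle of H all of whose edges have type t lifts to a cycle of G
   at least as long that uses only colours of t; since it gets at most 2r+1
   colours it is shorter than L.  So each type graph has circumference < L,
   hence, by an Erdos-Gallai type bound, at most L|H| edges, and summing
   over the 2^(M+1) possible types bounds ||H|| / |H| in terms of r only. *)

Section Circumference.
Variables (T : finType) (e : rel T).
Hypotheses (e_sym : symmetric e) (e_irr : irreflexive e).

(* the ordered pairs of adjacent vertices of S: twice the number of edges *)
Definition arcs (S : {set T}) : {set T * T} :=
  [set q | [&& e q.1 q.2, q.1 \in S & q.2 \in S]].

Lemma maximal_path (S : {set T}) (x : T) (s : seq T) :
  x \in S -> {subset s <= S} -> uniq (x :: s) -> path e x s ->
  exists x' s', [/\ x' \in S, {subset s' <= S}, uniq (x' :: s'), path e x' s'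
    & {in S, forall y, e x' y -> y \in s'}].
Proof.
move: {2}_.+1 (ltnSn (#|S| - size s)) => n.
elim: n x s => // n IH x s Hn xS sS us ps.
case: (pickP [pred y in S | e x y && (y \notin x :: s)]) => [y|none]; last first.
  exists x, s; split=> // y yS exy.
  have := none y; rewrite /= yS exy /= => /negbFE; rewrite inE.
  by case/predU1P=> [yx|//]; rewrite yx e_irr in exy.
case/and3P=> yS exy ys.
have yxsS : {subset y :: x :: s <= S}.
  by move=> z; rewrite !inE => /predU1P [->|/predU1P [->|/sS]].
have : size (y :: x :: s) <= #|S|.
  have /card_uniqP <- : uniq (y :: x :: s) by rewrite /= ys.
  by apply/subset_leq_card/subsetP.
move=> /= size_yxs.
apply: (IH y (x :: s)) => //=; first lia.
- by move=> z /predU1P [->|/sS].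
- by rewrite ys.
- by rewrite e_sym exy.
Qed.

(* If the head x of a repetition-free path x :: s has more than k neighbours
   on s, then x is adjacent to some s_i with i >= k, and closing the path
   there yields a cycle with more than k vertices. *)
Lemma close_path (k : nat) (x : T) (s : seq T) :
  0 < k -> uniq (x :: s) -> path e x s ->
  k < #|[set u | e x u & u \in s]| ->
  exists c : seq T, [/\ uniq c, cycle e c, 3 <= size c & k < size c].
Proof.
move=> k_gt0 us ps many.
have [i /andP [ki exi]] : exists i : 'I_(size s), (k <= i) && e x (nth x s i).
  apply/existsP; apply: contraLR many => /existsPn far; rewrite -leqNgt.
  apply: (@leq_trans #|[seq nth x s i | i <- iota 0 k]|); last first.
    by rewrite (leq_trans (card_size _)) // size_map size_iota.
  apply/subset_leq_card/subsetP => u; rewrite inE => /andP [exu us'].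
  have ilt : index u s < size s by rewrite index_mem.
  have := far (Ordinal ilt); rewrite /= nth_index // exu andbT -ltnNge => ik.
  by apply/mapP; exists (index u s); rewrite ?nth_index // mem_iota.
have size_take : size (take i.+1 s) = i.+1 by rewrite size_takel.
exists (x :: take i.+1 s); split; rewrite /= ?size_take; try lia.
- move: us => /= /andP [xs us]; rewrite take_uniq // andbT.
  by apply: contra xs; apply: mem_take.
- rewrite rcons_path take_path //= (last_nth x) size_take /= nth_take //.
  by rewrite e_sym.
Qed.

Lemma arcs_delete (S : {set T}) (v : T) :
  #|arcs S| <= #|arcs (S :\ v)| + 2 * #|[set u in S | e v u]|.
Proof.
set N := [set u in S | e v u].
have sub : arcs S \subset
    arcs (S :\ v) :|: [set (v, u) | u in N] :|: [set (u, v) | u in N].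
  apply/subsetP => -[a b]; rewrite !inE /= => /and3P [eab aS bS].
  have [av|av] := eqVneq a v.
    by subst a; rewrite (imset_f (fun u => (v, u))) ?orbT // inE bS eab.
  have [bv|bv] := eqVneq b v.
    by subst b; rewrite (imset_f (fun u => (u, v))) ?orbT // inE aS e_sym.
  by rewrite eab aS bS.
apply: (leq_trans (subset_leq_card sub)).
rewrite mul2n -addnn addnA (leq_trans (leq_card_setU _ _)) // leq_add //.
  by rewrite (leq_trans (leq_card_setU _ _)) // leq_add2l leq_imset_card.
exact: leq_imset_card.
Qed.

(* If every vertex of a nonempty set S has more than k neighbours in S, the
   graph induced on S has a cycle with more than k vertices: take a maximal
   path and close it at its head. *)
Lemma long_cycle_of_min_degree (k : nat) (S : {set T}) (v : T) :
  0 < k -> v \in S -> {in S, forall x, k < #|[set u in S | e x u]|} ->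
  exists c : seq T, [/\ uniq c, cycle e c, 3 <= size c & k < size c].
Proof.
move=> k_gt0 vS mindeg.
have nil_sub : {subset [::] <= S} by [].
have [x [s [xS sS us ps maxl]]] := @maximal_path S v [::] vS nil_sub isT isT.
apply: (close_path k_gt0 us ps); apply: (leq_trans (mindeg x xS)).
apply/subset_leq_card/subsetP => u; rewrite !inE => /andP [uS exu].
by rewrite exu maxl.
Qed.

Lemma arcs_of_short_cycles (k : nat) : 0 < k ->
  (forall c : seq T, uniq c -> cycle e c -> 3 <= size c -> size c <= k) ->
  forall S : {set T}, #|arcs S| <= 2 * k * #|S|.
Proof.
move=> k_gt0 short S; elim: {S}_.+1 {-2}S (ltnSn #|S|) => // m IH S HS.
case: (pickP [pred v in S | #|[set u in S | e v u]| <= k]) => [v|highdeg].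
  case/andP=> /= vS lowdeg.
  have := cardsD1 v S; rewrite vS => cardS.
  have /IH IHv : #|S :\ v| < m by move: HS; rewrite cardS; lia.
  apply: (leq_trans (arcs_delete S v)); rewrite cardS; nia.
have [S0|[v vS]] := set_0Vmem S.
  rewrite S0 cards0 muln0 leqn0 cards_eq0; apply/eqP/setP => q.
  by rewrite !inE /= andbF.
have [c [uc cc c3 kc]] : exists c : seq T,
    [/\ uniq c, cycle e c, 3 <= size c & k < size c].
  apply: (long_cycle_of_min_degree k_gt0 vS) => x xS.
  by move: (highdeg x); rewrite /= xS /= ltnNge => ->.
by have := short c uc cc c3; rewrite leqNgt kc.
Qed.

End Circumference.

Lemma path_zip (T : Type) (e : rel T) (x : T) (p : seq T) :
  path e x p -> all (fun q => e q.1 q.2) (zip (belast x p) p).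
Proof. by elim: p x => //= y p IH x /andP [-> /IH]. Qed.

Section ShallowMinor.
Variables (G H : sgraph) (r M : nat) (c : G -> G -> nat).
Hypothesis c_col : edge_colouring M c.
Variable B : H -> {set G}.
Hypothesis B_disj : forall w w', w != w' -> [disjoint B w & B w'].
Variables (root : H -> G) (par : H -> G -> G).
Hypothesis B_tree : forall w, [/\ root w \in B w, par w (root w) = root w &
  forall x, x \in B w -> [/\ par w x \in B w, x != root w -> adj x (par w x) &
                              iter r (par w) x = root w]].

Section Palette.
Variable t : {set 'I_M.+1}.

Definition padj (a b : G) : bool := adj a b && (inord (c a b) \in t).

(* its reflexive closure, convenient for walks that may stay put at a root *)
Definition padj_eq (a b : G) : bool := (a == b) || padj a b.

Lemma padj_sym : symmetric padj.
Proof.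
move=> a b; rewrite /padj adj_sym; case ab: (adj b a) => //=.
by have [-> _] := c_col ab.
Qed.

Lemma padj_eq_sym : symmetric padj_eq.
Proof. by move=> a b; rewrite /padj_eq padj_sym eq_sym. Qed.

Definition climb_colours (p : G -> G) (n : nat) (z : G) : seq nat :=
  [seq c u (p u) | u <- traject p z n].

Definition port (w : H) (z : G) : bool :=
  (z \in B w) && all (fun k => inord k \in t) (climb_colours (par w) r z).

Lemma climb_path (w : H) (n : nat) (z : G) : z \in B w ->
  all (fun k => inord k \in t) (climb_colours (par w) n z) ->
  path padj_eq z (traject (par w) (par w z) n) &&
  all (mem (B w)) (traject (par w) (par w z) n).
Proof.
have [_ par_root in_tree] := B_tree w.
elim: n z => //= n IH z zB /andP [zt climbt].
have [pzB z_adj _] := in_tree z zB.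
have /andP [pz allz] := IH _ pzB climbt.
rewrite pz allz pzB !andbT /padj_eq /padj.
have [->|zr] := eqVneq z (root w); first by rewrite par_root eqxx.
by rewrite z_adj // zt orbT.
Qed.

Lemma padj_of_uniq_path (y : G) (s : seq G) :
  path padj_eq y s -> uniq (y :: s) -> path padj y s.
Proof.
elim: s y => //= z s IH y /andP [yz ps] /andP [ys us].
rewrite IH // andbT; move: yz; rewrite /padj_eq.
by case: eqVneq => //= yz; rewrite yz mem_head in ys.
Qed.

(* Two ports of the same branch set are joined by a palette path inside it:
   climb from both to the root and remove the loops. *)
Lemma ports_connected (w : H) (y x : G) : port w y -> port w x ->
  exists s : seq G,
    [/\ path padj y s, last y s = x, uniq (y :: s) & {subset s <= B w}].
Proof.
have [_ _ in_tree] := B_tree w.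
move=> /andP [yB yt] /andP [xB xt].
have /andP [py sy] := climb_path yB yt; have /andP [px sx] := climb_path xB xt.
set qy := traject _ _ r in py sy; set qx := traject _ _ r in px sx.
have ly : last y qy = root w.
  by rewrite last_traject; have [_ _ ->] := in_tree y yB.
have lx : last x qx = root w.
  by rewrite last_traject; have [_ _ ->] := in_tree x xB.
have walk : path padj_eq y (qy ++ rev (belast x qx)).
  rewrite cat_path py ly -lx rev_path /=.
  by rewrite (@eq_path _ _ padj_eq) // => a b; rewrite padj_eq_sym.
have walk_end : last y (qy ++ rev (belast x qx)) = x.
  by rewrite last_cat ly -lx; case: (qx) => //= z q; rewrite rev_cons last_rcons.
move: walk_end; case: (shortenP walk) => s ps us sub ls.
exists s; split => //; first exact: padj_of_uniq_path.
move=> u /sub; rewrite mem_cat mem_rev => /orP [/(allP sy) //|/mem_belast].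
by rewrite inE => /predU1P [->|/(allP sx)].
Qed.

Definition linked (w w' : H) : Prop :=
  exists a b, [/\ port w a, port w' b & padj a b].

Section LiftPath.
Variable R : rel H.
Hypothesis R_linked : forall w w', R w w' -> linked w w'.

Lemma lift_path (ws : seq H) (w0 : H) (b a : G) :
  path R w0 ws -> uniq (w0 :: ws) -> port w0 b -> port (last w0 ws) a ->
  exists g : seq G, [/\ path padj b g, last b g = a, uniq (b :: g),
    size ws <= size g &
    {in b :: g, forall z, exists2 w, w \in w0 :: ws & z \in B w}].
Proof.
elim: ws w0 b => [|w1 ws IH] w0 b /=.
  move=> _ _ pb pa; have [s [ps ls us sB]] := ports_connected pb pa.
  exists s; split => // z zbs; exists w0; rewrite ?mem_head //.
  by case/predU1P: zbs => [->|/sB //]; case/andP: pb.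
case/andP=> Rw01 pws /andP [w0ws uws] pb pa.
have [a0 [b1 [pa0 pb1 a0b1]]] := R_linked Rw01.
have [s [ps ls us sB]] := ports_connected pb pa0.
have [g [pg lg ug sg gB]] := IH w1 b1 pws uws pb1 pa.
have bsB : {subset b :: s <= B w0}.
  by move=> z /predU1P [->|/sB //]; case/andP: pb.
exists (s ++ b1 :: g); split.
- by rewrite cat_path ps /= ls a0b1 pg.
- by rewrite last_cat /= lg.
- change (uniq ((b :: s) ++ b1 :: g)); rewrite cat_uniq us ug andbT.
  apply/hasPn => z /gB [w wws zw]; apply/negP => /bsB zw0.
  have w0w : w0 != w by apply: contraNneq w0ws => ->.
  by rewrite (disjointFr (B_disj w0w) zw0) in zw.
- by rewrite size_cat /= addnS ltnS (leq_trans sg) ?leq_addl.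
- move=> z; rewrite -cat_cons mem_cat => /orP [/bsB zB|/gB [w wws zB]].
    by exists w0; rewrite ?mem_head.
  by exists w; rewrite // inE wws orbT.
Qed.

Lemma lift_cycle (ws : seq H) :
  uniq ws -> cycle R ws -> 3 <= size ws ->
  exists g : seq G, [/\ is_cycle g, size ws <= size g & cycle padj g].
Proof.
case: ws => // w0 ws uws; rewrite /= rcons_path => /andP [pws Rlast] ws3.
have [a [b [pa pb ab]]] := R_linked Rlast.
have [g [pg lg ug sg _]] := lift_path pws uws pb pa.
have cg : cycle padj (b :: g) by rewrite /= rcons_path pg lg ab.
exists (b :: g); split => //; split => //; first by rewrite /= (leq_trans ws3).
by apply: sub_cycle cg => x y /andP [].
Qed.

End LiftPath.

Lemma ncolours_palette (g : seq G) : cycle padj g -> ncolours c g <= #|t|.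
Proof.
case: g => [_|x s cg]; first by rewrite /ncolours /cycle_edges.
rewrite /ncolours /cycle_edges rot1_cons.
have := path_zip cg; rewrite belast_rcons => edges_in.
set L := [seq c q.1 q.2 | q <- _].
have Lt : forall k, k \in L -> (k < M) && (inord k \in t).
  move=> k /mapP [q qi ->]; have /andP [qa qt] := allP edges_in q qi.
  by have [_ ->] := c_col qa; rewrite qt.
rewrite -(size_map (fun k => inord k : 'I_M.+1)) cardE.
apply: uniq_leq_size.
  rewrite map_inj_in_uniq ?undup_uniq // => k1 k2.
  rewrite !mem_undup => /Lt /andP [k1M _] /Lt /andP [k2M _] /(congr1 val).
  by rewrite /= !inordK // ltnS ltnW.
by move=> z /mapP [k]; rewrite mem_undup => /Lt /andP [_ kt] ->; rewrite mem_enum.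
Qed.

End Palette.

Definition witness (w w' : H) : option (G * G) :=
  [pick q : G * G | [&& q.1 \in B w, q.2 \in B w' & adj q.1 q.2]].

Definition type_colours (x y : G) (w w' : H) : seq nat :=
  c x y :: climb_colours (par w) r x ++ climb_colours (par w') r y.

Definition edge_type (w w' : H) : {set 'I_M.+1} :=
  if witness w w' is Some q then [set i in map inord (type_colours q.1 q.2 w w')]
  else set0.

Definition type_graph (t : {set 'I_M.+1}) : rel H :=
  fun w w' => adj w w' && ((edge_type w w' == t) || (edge_type w' w == t)).

Lemma type_graph_sym (t : {set 'I_M.+1}) : symmetric (type_graph t).
Proof. by move=> w w'; rewrite /type_graph adj_sym orbC. Qed.

Lemma type_graph_irr (t : {set 'I_M.+1}) : irreflexive (type_graph t).
Proof. by move=> w; rewrite /type_graph adj_irr. Qed.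

Lemma card_edge_type (w w' : H) : #|edge_type w w'| <= r.*2.+1.
Proof.
rewrite /edge_type; case: (witness w w') => [q|]; last by rewrite cards0.
rewrite cardsE (leq_trans (card_size _)) //.
by rewrite size_map /= size_cat !size_map !size_traject addnn.
Qed.

Lemma type_graph_edge_type (w w' : H) :
  adj w w' -> type_graph (edge_type w w') w w'.
Proof. by move=> ww'; rewrite /type_graph ww' eqxx. Qed.

Hypothesis B_adj : forall w w', adj w w' ->
  exists x y, [/\ x \in B w, y \in B w' & adj x y].

Lemma edge_type_linked (w w' : H) : adj w w' -> linked (edge_type w w') w w'.
Proof.
rewrite /edge_type /witness => ww'; case: pickP => [[x y] /and3P [xB yB xy]|none].
  have in_type k : k \in type_colours x y w w' ->
      inord k \in [set i in map inord (type_colours x y w w')].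
    by move=> kin; rewrite inE map_f.
  exists x, y; split.
  - rewrite /port xB; apply/allP => k kin.
    by rewrite in_type // inE mem_cat kin orbT.
  - rewrite /port yB; apply/allP => k kin.
    by rewrite in_type // inE mem_cat kin !orbT.
  - by rewrite /padj xy in_type // mem_head.
have [x [y [xB yB xy]]] := B_adj ww'.
by have := none (x, y); rewrite /= xB yB xy.
Qed.

Lemma type_graph_linked (t : {set 'I_M.+1}) (w w' : H) :
  type_graph t w w' -> linked t w w'.
Proof.
case/andP=> ww' /orP [/eqP <-|/eqP <-]; first exact: edge_type_linked.
have [a [b [pa pb ab]]] : linked (edge_type w' w) w' w.
  by apply: edge_type_linked; rewrite adj_sym.
by exists b, a; rewrite padj_sym.
Qed.

Lemma type_graph_cycle (t : {set 'I_M.+1}) (s : seq H) :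
  uniq s -> cycle (type_graph t) s -> 3 <= size s ->
  exists g : seq G, [/\ is_cycle g, size s <= size g & ncolours c g <= r.*2.+1].
Proof.
move=> us cs s3; have [g [gc sg pg]] := lift_cycle (@type_graph_linked t) us cs s3.
exists g; split => //; apply: (leq_trans (ncolours_palette pg)).
case: s us cs s3 {sg} => // w0 s _; rewrite /= rcons_path => /andP [_].
by case/andP=> _ /orP [/eqP <-|/eqP <-] _; apply: card_edge_type.
Qed.

End ShallowMinor.

Lemma card_le_sum_classes (T I : finType) (A : {set T}) (E : I -> {set T})
    (ty : T -> I) :
  {in A, forall q, q \in E (ty q)} -> #|A| <= \sum_i #|E i|.
Proof.
move=> AE; rewrite -sum1_card (partition_big ty predT) //=.
apply: leq_sum => i _; rewrite sum1_card.
apply/subset_leq_card/subsetP => q /andP [qA /eqP <-]; exact: AE.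
Qed.

Lemma nedges_le_type_arcs (G H : sgraph) (r M : nat) (c : G -> G -> nat)
    (B : H -> {set G}) (par : H -> G -> G) :
  nedges H <= \sum_(t : {set 'I_M.+1}) #|arcs (type_graph r c B par t) setT|.
Proof.
apply: leq_trans (leq_div _ _) _.
apply: (card_le_sum_classes (ty := fun q => edge_type r M c B par q.1 q.2)).
by move=> q; rewrite !inE => ww'; rewrite type_graph_edge_type.
Qed.

Lemma few_colours_short (G : sgraph) (f : nat -> nat) (p L : nat)
    (c : G -> G -> nat) (g : seq G) :
  (forall x y, x <= y -> f x <= f y) -> good_colouring f p c ->
  p < f L -> is_cycle g -> ncolours c g <= p -> size g < L.
Proof.
move=> f_nondecr c_good pfL gc gp; rewrite ltnNge; apply/negP => /f_nondecr.
by have := c_good g gc; lia.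
Qed.

Lemma tree_choice (G H : sgraph) (r : nat) (B : H -> {set G}) :
  (forall w, shallow_tree r (B w)) ->
  exists (root : H -> G) (par : H -> G -> G), forall w,
    [/\ root w \in B w, par w (root w) = root w &
      forall x, x \in B w -> [/\ par w x \in B w, x != root w -> adj x (par w x)
                                  & iter r (par w) x = root w]].
Proof.
move=> B_tree.
have [d Hd] := functional_choice (fun w (d : G * (G -> G)) =>
  [/\ d.1 \in B w, d.2 d.1 = d.1 & forall x, x \in B w ->
    [/\ d.2 x \in B w, x != d.1 -> adj x (d.2 x) & iter r d.2 x = d.1]])
  (fun w => let: ex_intro rt (ex_intro pr h) := B_tree w in
            ex_intro _ (rt, pr) h).
by exists (fun w => (d w).1), (fun w => (d w).2).
Qed.

Theorem mainTheorem4 (C : sgraph -> Prop) (f : nat -> nat)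
  (f_unbounded : forall m, exists x, m <= f x)
  (f_nondecr : forall x y, x <= y -> f x <= f y)
  (f_le : forall x, f x <= x)
  (hN : forall r : nat, 0 < r -> exists M : nat, forall G, C G -> Nf_le G f r M) :
  bounded_expansion C.
Proof.
move=> r.
have [M hM] := hN r.*2.+1 isT.
have [L fL] := f_unbounded r.*2.+2.
have L_gt0 : 0 < L by have := f_le L; lia.
exists (#|{set 'I_M.+1}| * (2 * L)) => G CG H [B [B_tree B_disj B_adj]].
have [c [c_col c_good]] := hM G CG.
have [root [par B_rooted]] := tree_choice B_tree.
have short_cycles (t : {set 'I_M.+1}) (s : seq H) :
    uniq s -> cycle (type_graph r c B par t) s -> 3 <= size s -> size s <= L.
  move=> us cs s3.
  have [g [gc sg gcol]] := type_graph_cycle c_col B_disj B_rooted B_adj us cs s3.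
  by rewrite (leq_trans sg) // ltnW // (few_colours_short f_nondecr c_good fL).
apply: (leq_trans (nedges_le_type_arcs r M c B par)).
rewrite -mulnA -cardsT -sum_nat_const leq_sum // => t _.
by have := arcs_of_short_cycles (type_graph_sym r c B par t)
  (type_graph_irr r c B par t) L_gt0 (short_cycles t) setT.
Qed.
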